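(* Let $\mathcal D[t]\subset\mathcal H\subset\mathcal D^\times[t^\times]$ be a rigged Hilbert space with $\mathcal D[t]$ a reflexive Fréchet space, $(X,\mu)$ a $\sigma$-finite measure space, $\omega:X\to\mathcal D^\times$ a Riesz distribution basis and $\theta$ its dual. For measurable $m:X\to\mathbb C$ write $M_m:=M_{m,\omega,\theta}$. If $m_1,m_2$ are measurable functions with $M_{m_1},M_{m_2}\in\mathcal L^\dagger(\mathcal D)$, then for every $f\in\mathcal D$ one has $f\in D(M_{m_1m_2})$ and $M_{m_1}M_{m_2}f=M_{m_1m_2}f$.
   Context: Rigged Hilbert space: $\mathcal D$ dense subspace of Hilbert space $\mathcal H$ with a locally convex topology finer than the norm topology, $\mathcal D^\times$ its conjugate dual with strong dual topology, $\mathcal H\subset\mathcal D^\times$, pairing extending the inner product, $\langle f,F\rangle:=\overline{\langle F,f\rangle}$. Weakly measurable map $\omega:X\to\mathcal D^\times$: $x\mapsto\langle f,\omega_x\rangle$ measurable for all $f\in\mathcal D$. Distribution frame: there are $A,B>0$ with $A\|f\|^2\le\int_X|\langle f,\omega_x\rangle|^2d\mu\le B\|f\|^2$ for $f\in\mathcal D$. $\omega$ is $\mu$-independent if the only measurable $\xi$ with $\int_X\xi(x)\langle g,\omega_x\rangle d\mu=0$ for all $g\in\mathcal D$ is $\xi=0$ a.e. A Riesz distribution basis is a $\mu$-independent distribution frame; its dual $\theta:X\to\mathcal D^\times$ is the unique distribution frame with $\langle f,g\rangle=\int_X\langle f,\theta_x\rangle\langle\omega_x,g\rangle d\mu$ for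 all $f,g\in\mathcal D$ (it is also a Riesz distribution basis and $\omega$ is its dual). Distribution multiplier $M_{m,\omega,\theta}$: domain is the set of $f\in\mathcal D$ such that $\int_X m(x)\langle f,\omega_x\rangle\langle\theta_x,g\rangle d\mu$ converges for all $g\in\mathcal D$ and is bounded in $g$ w.r.t. the $\mathcal H$-norm; $M_{m,\omega,\theta}f\in\mathcal H$ is its Riesz representative. $\mathcal L^\dagger(\mathcal D)$ is the set of closable operators $A$ in $\mathcal H$ with $D(A)=\mathcal D$, $D(A^* )\supseteq\mathcal D$, and $A\mathcal D\subseteq\mathcal D$, $A^*\mathcal D\subseteq\mathcal D$. *)

From mathcomp Require Import all_boot all_algebra.
From mathcomp Require Import complex.
From mathcomp Require Import all_classical all_reals all_analysis.
Set Implicit Arguments. Unset Strict Implicit. Unset Printing Implicit Defensive.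
Import GRing.Theory Num.Theory.
Local Open Scope ring_scope.
Local Open Scope classical_set_scope.

Section RHS.
Context {R : realType}.
Local Notation C := R[i].

Definition cmod (z : C) : R := Num.sqrt (complex.Re z ^+ 2 + complex.Im z ^+ 2).

Context {V : lmodType C}.

Definition inner_product (ip : V -> V -> C) : Prop :=
  [/\ (forall (a : C) (x y z : V), ip (a *: x + y) z = a * ip x z + ip y z),
      (forall x y : V, ip y x = (ip x y)^*),
      (forall x : V, complex.Im (ip x x) = 0 /\ 0 <= complex.Re (ip x x)) &
      (forall x : V, ip x x = 0 -> x = 0)].

Definition hnorm (ip : V -> V -> C) (x : V) : R := Num.sqrt (complex.Re (ip x x)).

Definition hcvg (ip : V -> V -> C) (u : nat -> V) (l : V) : Prop :=
  forall e : R, 0 < e -> exists N : nat, forall n, (N <= n)%N -> hnorm ip (u n - l) < e.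

Definition hilbert_space (ip : V -> V -> C) : Prop :=
  inner_product ip /\
  (forall u : nat -> V,
     (forall e : R, 0 < e -> exists N : nat, forall n m, (N <= n)%N -> (N <= m)%N ->
        hnorm ip (u n - u m) < e) ->
     exists l : V, hcvg ip u l).

(** ---------- the Frechet space D[t] ----------
   D is a subspace of H (given as a predicate), and its locally convex
   topology t is the one generated by the countable family of seminorms
   p 0, p 1, ... (Frechet = complete metrizable locally convex space). *)
Definition pmax (p : nat -> V -> R) (n : nat) (x : V) : R :=
  \big[Num.max/0]_(k < n.+1) p k x.

Definition frechet_space (D : V -> Prop) (p : nat -> V -> R) : Prop :=
  [/\ (D 0 /\ (forall (a : C) x y, D x -> D y -> D (a *: x + y))),
      [/\ (forall n x, D x -> 0 <= p n x),
           (forall n x y, D x -> D y -> p n (x + y) <= p n x + p n y) &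
           (forall n (a : C) x, D x -> p n (a *: x) = cmod a * p n x)],
      (forall x, D x -> (forall n, p n x = 0) -> x = 0) &
      (forall u : nat -> V, (forall k, D (u k)) ->
        (forall n (e : R), 0 < e -> exists N : nat, forall k l, (N <= k)%N -> (N <= l)%N ->
            p n (u k - u l) < e) ->
        exists2 x, D x & forall n (e : R), 0 < e -> exists N : nat, forall k, (N <= k)%N ->
            p n (u k - x) < e)].

(** conjugate dual D^x: continuous conjugate-linear functionals on D[t].
   A functional F is represented by f |-> <F, f>; the pairing extends the
   inner product (h in H corresponds to f |-> ip h f). *)
Definition conj_dual (D : V -> Prop) (p : nat -> V -> R) (F : V -> C) : Prop :=
  (forall (a : C) x y, D x -> D y -> F (a *: x + y) = a^* * F x + F y) /\
  (exists (n : nat) (c : R), forall x, D x -> cmod (F x) <= c * pmax p n x).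

Definition tbounded (D : V -> Prop) (p : nat -> V -> R) (B : V -> Prop) : Prop :=
  (forall x, B x -> D x) /\ (forall n, exists c : R, forall x, B x -> p n x <= c).

(** bounded subsets of D^x[t^x] (strong dual topology: uniform convergence
   on bounded subsets of D[t]) *)
Definition sbounded (D : V -> Prop) (p : nat -> V -> R) (BB : (V -> C) -> Prop) : Prop :=
  (forall F, BB F -> conj_dual D p F) /\
  (forall B, tbounded D p B -> exists c : R, forall F x, BB F -> B x -> cmod (F x) <= c).

Definition bidual (D : V -> Prop) (p : nat -> V -> R) (Phi : (V -> C) -> C) : Prop :=
  (forall (a : C) F G, conj_dual D p F -> conj_dual D p G ->
      Phi (fun x => a * F x + G x) = a^* * Phi F + Phi G) /\
  (exists2 B, tbounded D p B & exists c : R, forall F (s : R), conj_dual D p F -> 0 <= s ->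
      (forall x, B x -> cmod (F x) <= s) -> cmod (Phi F) <= c * s).

(** reflexivity: the canonical map J : D -> D^xx, J f = (F |-> conj <F,f>),
   is onto and a topological isomorphism onto D^xx with its strong topology
   (uniform convergence on strongly bounded subsets of D^x). *)
Definition reflexive (D : V -> Prop) (p : nat -> V -> R) : Prop :=
  [/\ (forall Phi, bidual D p Phi ->
          exists2 x, D x & forall F, conj_dual D p F -> Phi F = (F x)^*),
      (forall BB, sbounded D p BB -> exists (n : nat) (c : R),
          forall F x, BB F -> D x -> cmod (F x) <= c * pmax p n x) &
      (forall n : nat, exists2 BB, sbounded D p BB & exists c : R,
          forall x (s : R), D x -> 0 <= s -> (forall F, BB F -> cmod (F x) <= s) ->
             p n x <= c * s)].

(** rigged Hilbert space D[t] c H c D^x[t^x] with D[t] reflexive Frechet: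
   D dense in H, topology t finer than the norm topology. *)
Definition rigged_reflexive_frechet (ip : V -> V -> C) (D : V -> Prop)
    (p : nat -> V -> R) : Prop :=
  [/\ hilbert_space ip, frechet_space D p, reflexive D p,
      (exists (n : nat) (c : R), forall x, D x -> hnorm ip x <= c * pmax p n x) &
      (forall (h : V) (e : R), 0 < e -> exists2 x, D x & hnorm ip (h - x) < e)].

(** ---------- operators, L^dagger(D) ----------
   A (possibly unbounded) linear operator in H is given by its graph
   A : V -> V -> Prop (A f h  means  f in D(A) and A f = h). *)
Definition lin_operator (A : V -> V -> Prop) : Prop :=
  (forall f h h', A f h -> A f h' -> h = h') /\
  (forall (a : C) f h f' h', A f h -> A f' h' -> A (a *: f + f') (a *: h + h')).

Definition closable (ip : V -> V -> C) (A : V -> V -> Prop) : Prop :=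
  forall (u v : nat -> V) (k : V), (forall n, A (u n) (v n)) ->
    hcvg ip u 0 -> hcvg ip v k -> k = 0.

(** graph of the adjoint: A^* g = k *)
Definition adjoint (ip : V -> V -> C) (A : V -> V -> Prop) (g k : V) : Prop :=
  forall f h, A f h -> ip h g = ip f k.

Definition Ldagger (ip : V -> V -> C) (D : V -> Prop) (A : V -> V -> Prop) : Prop :=
  [/\ lin_operator A /\ closable ip A,
      (forall f, (exists h, A f h) <-> D f),
      (forall f h, A f h -> D h),
      (forall g, D g -> exists k, adjoint ip A g k) &
      (forall g k, D g -> adjoint ip A g k -> D k)].

Context {d : measure_display} {X : measurableType d}.

Definition cmeasurable (u : X -> C) : Prop :=
  measurable_fun setT (fun x => complex.Re (u x)) /\
  measurable_fun setT (fun x => complex.Im (u x)).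

Definition cintegrable (mu : {measure set X -> \bar R}) (u : X -> C) : Prop :=
  mu.-integrable setT (fun x => (complex.Re (u x))%:E) /\
  mu.-integrable setT (fun x => (complex.Im (u x))%:E).

Definition cint (mu : {measure set X -> \bar R}) (u : X -> C) : C :=
  @Complex R (fine (\int[mu]_x (complex.Re (u x))%:E)) (fine (\int[mu]_x (complex.Im (u x))%:E)).

(** omega : X -> D^x, weakly measurable; omega x f = <omega_x, f>, so that
   <f, omega_x> = (omega x f)^* *)
Definition weakly_measurable (D : V -> Prop) (p : nat -> V -> R) (om : X -> V -> C) : Prop :=
  (forall x, conj_dual D p (om x)) /\
  (forall f, D f -> cmeasurable (fun x => (om x f)^*)).

Definition distribution_frame (ip : V -> V -> C) (D : V -> Prop) (p : nat -> V -> R)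
    (mu : {measure set X -> \bar R}) (om : X -> V -> C) : Prop :=
  weakly_measurable D p om /\
  exists (A B : R), [/\ 0 < A, 0 < B & forall f, D f ->
    ((A * hnorm ip f ^+ 2)%:E <= \int[mu]_x ((cmod (om x f)) ^+ 2)%:E)%E /\
    (\int[mu]_x ((cmod (om x f)) ^+ 2)%:E <= (B * hnorm ip f ^+ 2)%:E)%E].

Definition mu_independent (D : V -> Prop) (mu : {measure set X -> \bar R})
    (om : X -> V -> C) : Prop :=
  forall xi : X -> C, cmeasurable xi ->
    (forall g, D g -> cintegrable mu (fun x => xi x * (om x g)^*) /\
                     cint mu (fun x => xi x * (om x g)^*) = 0) ->
    {ae mu, forall x, xi x = 0}.

Definition riesz_distribution_basis (ip : V -> V -> C) (D : V -> Prop) (p : nat -> V -> R)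
    (mu : {measure set X -> \bar R}) (om : X -> V -> C) : Prop :=
  distribution_frame ip D p mu om /\ mu_independent D mu om.

Definition dual_basis (ip : V -> V -> C) (D : V -> Prop) (p : nat -> V -> R)
    (mu : {measure set X -> \bar R}) (om th : X -> V -> C) : Prop :=
  distribution_frame ip D p mu th /\
  forall f g, D f -> D g ->
    cintegrable mu (fun x => (th x f)^* * om x g) /\
    ip f g = cint mu (fun x => (th x f)^* * om x g).

(** graph of the distribution multiplier M_{m,omega,theta}:
   mult_graph m f h  means  f in D(M_m) and M_m f = h *)
Definition mult_graph (ip : V -> V -> C) (D : V -> Prop) (mu : {measure set X -> \bar R})
    (om th : X -> V -> C) (m : X -> C) (f h : V) : Prop :=
  [/\ D f,
      (forall g, D g -> cintegrable mu (fun x => m x * (om x f)^* * th x g)),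
      (exists c : R, forall g, D g ->
          cmod (cint mu (fun x => m x * (om x f)^* * th x g)) <= c * hnorm ip g) &
      (forall g, D g -> ip h g = cint mu (fun x => m x * (om x f)^* * th x g))].

End RHS.

From Pilot Require Import Defs.
From mathcomp Require Import all_boot all_algebra.
From mathcomp Require Import complex.
From mathcomp Require Import all_classical all_reals all_analysis.
From mathcomp Require Import measurable_realfun ring.
Import GRing.Theory Num.Theory.
Local Open Scope ring_scope.
Local Open Scope classical_set_scope.

(* Otherwise [Re] is the real part of a [numClosedFieldType], not the
   projection of [R[i]] used in Defs. *)
Local Notation Re := complex.Re.
Local Notation Im := complex.Im.

(* The adjoint of a multiplier [M_m] in L^dagger(D) is read off the dual
   basis: if [M_m^* g = k] with [g, k] in D, then pairing against every
   [<h, omega_x>] gives [int (<theta_x, k> - m <theta_x, g>) <h, omega_x> = 0],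
   so by mu-independence of omega, [<theta_x, k> = m(x) <theta_x, g>] a.e.
   Hence for [f] in D,
     [int m1 m2 <f, omega_x> <theta_x, g> = int m2 <f, omega_x> <theta_x, k>
                                          = <M_m2 f, k> = <M_m1 M_m2 f, g>],
   which says that [f] is in [D(M_(m1 m2))] with [M_(m1 m2) f = M_m1 M_m2 f]. *)

Section real_integral.
Context {d : measure_display} {X : measurableType d} {R : realType}.
Variable mu : {measure set X -> \bar R}.

Lemma integrable_ae_eq (f g : X -> \bar R) :
  mu.-integrable setT f -> measurable_fun setT g -> ae_eq mu setT f g ->
  mu.-integrable setT g.
Proof.
move=> /integrableP[mf intf] mg fg; apply/integrableP; split => //.
rewrite (ae_eq_integral (fun x => `|f x|)%E) //.
- exact: measurableT_comp.
- exact: measurableT_comp.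
- by apply: filterS fg => x /= fgx /fgx ->.
Qed.

Lemma RintegralN (f : X -> R) :
  mu.-integrable setT (EFin \o f) -> \int[mu]_x (- f x) = - \int[mu]_x f x.
Proof.
move=> intf; rewrite (_ : (fun x => - f x) = fun x => 0 - f x); last first.
  by apply/funext => x; rewrite sub0r.
rewrite RintegralB //; last exact: integrable0.
by rewrite /Rintegral integral0 sub0r.
Qed.

End real_integral.

Section complex_integral.
Context {R : realType} {d : measure_display} {X : measurableType d}.
Variable mu : {measure set X -> \bar R}.
Implicit Types u v : X -> R[i].

Lemma ReM (a b : R[i]) : Re (a * b) = Re a * Re b - Im a * Im b.
Proof. by case: a b => [? ?] [? ?]. Qed.

Lemma ImM (a b : R[i]) : Im (a * b) = Re a * Im b + Im a * Re b.
Proof. by case: a b => [? ?] [? ?]. Qed.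

Lemma ReJ (a : R[i]) : Re a^* = Re a.
Proof. by case: a. Qed.

Lemma ImJ (a : R[i]) : Im a^* = - Im a.
Proof. by case: a. Qed.

Lemma ReB (a b : R[i]) : Re (a - b) = Re a - Re b.
Proof. by case: a b => [? ?] [? ?]. Qed.

Lemma ImB (a b : R[i]) : Im (a - b) = Im a - Im b.
Proof. by case: a b => [? ?] [? ?]. Qed.

Lemma cintE u : cint mu u = Complex (\int[mu]_x Re (u x)) (\int[mu]_x Im (u x)).
Proof. by []. Qed.

Lemma cmeasurableJ u : cmeasurable (fun x => (u x)^*) <-> cmeasurable u.
Proof.
rewrite /cmeasurable (_ : (fun x => Re (u x)^*) = fun x => Re (u x)); last first.
  by apply/funext => x; rewrite ReJ.
rewrite (_ : (fun x => Im (u x)^*) = \- (fun x => Im (u x))); last first.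
  by apply/funext => x; rewrite ImJ.
split=> -[mRe mIm]; split => //; last exact: measurable_funN.
by rewrite -[fun x => _]opprK; exact: measurable_funN.
Qed.

Lemma cmeasurableB u v :
  cmeasurable u -> cmeasurable v -> cmeasurable (fun x => u x - v x).
Proof.
move=> [mRu mIu] [mRv mIv]; split.
- rewrite (_ : (fun x => _) = (fun x => Re (u x)) \- (fun x => Re (v x))).
    exact: measurable_funB.
  by apply/funext => x; rewrite ReB.
- rewrite (_ : (fun x => _) = (fun x => Im (u x)) \- (fun x => Im (v x))).
    exact: measurable_funB.
  by apply/funext => x; rewrite ImB.
Qed.

Lemma cmeasurableM u v :
  cmeasurable u -> cmeasurable v -> cmeasurable (fun x => u x * v x).
Proof.
move=> [mRu mIu] [mRv mIv]; split.
- rewrite (_ : (fun x => _) = (fun x => Re (u x) * Re (v x)) \-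
                              (fun x => Im (u x) * Im (v x))).
    by apply: measurable_funB; exact: measurable_funM.
  by apply/funext => x; rewrite ReM.
- rewrite (_ : (fun x => _) = (fun x => Re (u x) * Im (v x)) \+
                              (fun x => Im (u x) * Re (v x))).
    by apply: measurable_funD; exact: measurable_funM.
  by apply/funext => x; rewrite ImM.
Qed.

Lemma cintegrableB u v :
  cintegrable mu u -> cintegrable mu v -> cintegrable mu (fun x => u x - v x).
Proof.
move=> [iRu iIu] [iRv iIv]; split.
- apply: eq_integrable (integrableB measurableT iRu iRv) => //= x _.
  by rewrite ReB EFinB.
- apply: eq_integrable (integrableB measurableT iIu iIv) => //= x _.
  by rewrite ImB EFinB.
Qed.

Lemma cintB u v : cintegrable mu u -> cintegrable mu v ->
  cint mu (fun x => u x - v x) = cint mu u - cint mu v.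
Proof.
move=> [iRu iIu] [iRv iIv]; rewrite !cintE.
rewrite (_ : (fun x => Re (u x - v x)) = fun x => Re (u x) - Re (v x)); last first.
  by apply/funext => x; rewrite ReB.
rewrite (_ : (fun x => Im (u x - v x)) = fun x => Im (u x) - Im (v x)); last first.
  by apply/funext => x; rewrite ImB.
by rewrite !RintegralB.
Qed.

Lemma cintegrableJ u : cintegrable mu u -> cintegrable mu (fun x => (u x)^*).
Proof.
move=> [iRu iIu]; split.
- by apply: eq_integrable iRu => // x _; rewrite ReJ.
- by apply: eq_integrable (integrableN iIu) => // x _; rewrite /= ImJ.
Qed.

Lemma cintJ u : cintegrable mu u -> cint mu (fun x => (u x)^*) = (cint mu u)^*.
Proof.
move=> [_ iIu]; rewrite !cintE.
rewrite (_ : (fun x => Re (u x)^*) = fun x => Re (u x)); last first.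
  by apply/funext => x; rewrite ReJ.
rewrite (_ : (fun x => Im (u x)^*) = fun x => - Im (u x)); last first.
  by apply/funext => x; rewrite ImJ.
by rewrite RintegralN.
Qed.

Lemma cintegrable_ae_eq u v : cintegrable mu u -> cmeasurable v ->
  {ae mu, forall x, u x = v x} -> cintegrable mu v.
Proof.
move=> [iRu iIu] [mRv mIv] uv; split.
- apply: integrable_ae_eq iRu _ _; first exact/measurable_EFinP.
  by apply: filterS uv => x /= ->.
- apply: integrable_ae_eq iIu _ _; first exact/measurable_EFinP.
  by apply: filterS uv => x /= ->.
Qed.

Lemma cint_ae_eq u v : cintegrable mu u -> cmeasurable v ->
  {ae mu, forall x, u x = v x} -> cint mu u = cint mu v.
Proof.
move=> [iRu iIu] [mRv mIv] uv; rewrite !cintE.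
congr Complex; congr fine; apply: ae_eq_integral => //.
- exact: measurable_int iRu.
- exact/measurable_EFinP.
- by apply: filterS uv => x /= ->.
- exact: measurable_int iIu.
- exact/measurable_EFinP.
- by apply: filterS uv => x /= ->.
Qed.

End complex_integral.

Section multiplier_composition.
Context {R : realType} {V : lmodType R[i]} {ip : V -> V -> R[i]} {D : V -> Prop}.
Context {d : measure_display} {X : measurableType d}.
Context {mu : {measure set X -> \bar R}} {om th : X -> V -> R[i]}.

Hypothesis ip_sym : forall x y, ip y x = (ip x y)^*.
Hypothesis om_indep : mu_independent D mu om.
Hypothesis om_meas : forall f, D f -> cmeasurable (fun x => (om x f)^*).
Hypothesis th_meas : forall g, D g -> cmeasurable (fun x => (th x g)^*).
Hypothesis th_dual : forall f g, D f -> D g ->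
  cintegrable mu (fun x => (th x f)^* * om x g) /\
  ip f g = cint mu (fun x => (th x f)^* * om x g).

Local Notation M := (mult_graph ip D mu om th).

Lemma mult_graph_adjoint_ae {m : X -> R[i]} {g k : V} :
  Ldagger ip D (M m) -> cmeasurable m -> D g -> adjoint ip (M m) g k ->
  {ae mu, forall x, th x k = m x * th x g}.
Proof.
move=> [_ domM _ _ adjD] mm Dg adj_gk; have Dk := adjD g k Dg adj_gk.
suff : {ae mu, forall x, th x k - m x * th x g = 0}.
  by apply: filterS => x /eqP; rewrite subr_eq0 => /eqP.
apply: om_indep => [|h Dh].
  by apply: cmeasurableB; last apply: cmeasurableM => //; apply/cmeasurableJ/th_meas.
have [h' Mhh'] := (domM h).2 Dh; have [_ intM _ ipM] := Mhh'.
have [int_kh ip_kh] := th_dual k h Dk Dh.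
have conj_kh : (fun x => ((th x k)^* * om x h)^*) = fun x => th x k * (om x h)^*.
  by apply/funext => x; rewrite rmorphM /= conjCK.
have int_hk := cintegrableJ mu _ int_kh; rewrite conj_kh in int_hk.
have ip_hk : ip h k = cint mu (fun x => th x k * (om x h)^*).
  by rewrite ip_sym ip_kh -(cintJ mu _ int_kh) conj_kh.
have -> : (fun x => (th x k - m x * th x g) * (om x h)^*) =
          fun x => th x k * (om x h)^* - m x * (om x h)^* * th x g.
  by apply/funext => x; ring.
have int_Mg := intM g Dg.
split; first exact: cintegrableB.
by rewrite cintB // -ip_hk -ipM // (adj_gk _ _ Mhh') subrr.
Qed.

Lemma mult_graph_comp {m1 m2 : X -> R[i]} {f h1 h2 : V} :
  Ldagger ip D (M m1) -> cmeasurable m1 -> cmeasurable m2 ->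
  M m2 f h1 -> M m1 h1 h2 -> M (fun x => m1 x * m2 x) f h2.
Proof.
move=> L1 mm1 mm2 M2f M1h1.
have [Df int2 _ ip2] := M2f; have [_ _ [c bound1] ip1] := M1h1.
have prod_eq g : D g ->
    cintegrable mu (fun x => m1 x * m2 x * (om x f)^* * th x g) /\
    cint mu (fun x => m1 x * m2 x * (om x f)^* * th x g) = ip h2 g.
  move=> Dg; have [_ _ _ adjM1 adjD1] := L1.
  have [k adj_gk] := adjM1 g Dg; have Dk := adjD1 g k Dg adj_gk.
  have ae_eq_k : {ae mu, forall x, m2 x * (om x f)^* * th x k =
                                   m1 x * m2 x * (om x f)^* * th x g}.
    by apply: filterS (mult_graph_adjoint_ae L1 mm1 Dg adj_gk) => x ->; ring.
  have meas_g : cmeasurable (fun x => m1 x * m2 x * (om x f)^* * th x g).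
    apply: cmeasurableM; last exact/cmeasurableJ/th_meas.
    by apply: cmeasurableM; [exact: cmeasurableM | exact: om_meas].
  split; first exact: cintegrable_ae_eq mu _ _ (int2 k Dk) meas_g ae_eq_k.
  by rewrite -(cint_ae_eq mu _ _ (int2 k Dk) meas_g ae_eq_k) -ip2 // (adj_gk _ _ M1h1).
split => // [g Dg | | g Dg]; first by case: (prod_eq g Dg).
- by exists c => g Dg; case: (prod_eq g Dg) => _ ->; rewrite ip1 //; exact: bound1.
- by case: (prod_eq g Dg).
Qed.

End multiplier_composition.

Theorem proposition5p2 (R : realType) (V : lmodType R[i]) (ip : V -> V -> R[i])
  (D : V -> Prop) (p : nat -> V -> R)
  (d : measure_display) (X : measurableType d) (mu : {measure set X -> \bar R})
  (om th : X -> V -> R[i]) (m1 m2 : X -> R[i]) :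
  rigged_reflexive_frechet ip D p ->
  sigma_finite setT mu ->
  riesz_distribution_basis ip D p mu om ->
  dual_basis ip D p mu om th ->
  cmeasurable m1 -> cmeasurable m2 ->
  Ldagger ip D (mult_graph ip D mu om th m1) ->
  Ldagger ip D (mult_graph ip D mu om th m2) ->
  forall f : V, D f ->
    (exists h : V, mult_graph ip D mu om th (fun x => m1 x * m2 x) f h) /\
    (forall h1 h2 : V, mult_graph ip D mu om th m2 f h1 ->
       mult_graph ip D mu om th m1 h1 h2 ->
       mult_graph ip D mu om th (fun x => m1 x * m2 x) f h2).
Proof.
move=> [[[_ ip_sym _ _] _] _ _ _ _] _ [[[_ om_meas] _] om_indep]
  [[[_ th_meas] _] th_dual] mm1 mm2 L1 L2 f Df.
have comp h1 h2 := mult_graph_comp ip_sym om_indep om_meas th_meas th_dual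
  (f := f) (h1 := h1) (h2 := h2) L1 mm1 mm2.
split; last exact: comp.
have [_ dom1 _ _ _] := L1; have [_ dom2 ran2 _ _] := L2.
have [h1 M2f] := (dom2 f).2 Df.
have [h2 M1h1] := (dom1 h1).2 (ran2 f h1 M2f).
by exists h2; exact: comp M2f M1h1.
Qed.
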